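(* Fix $\alpha>2$, $\beta>0$, $d>0$ and an integer $D\ge0$, and let $c_1:=\frac{2\pi^2}{\alpha}\csc\!\left(\frac{2\pi}{\alpha}\right)$. For $\lambda>0$ and positive integers $N$ define $$q_\lambda(N):=1-\exp\!\Big(-c_1\lambda\big(\tfrac{d}{N}\big)^2\beta^{2/\alpha}\Big),\qquad g_\lambda(N):=\frac{\Big(1-q_\lambda(N)^{\lfloor D/N\rfloor+1}\Big)^N}{D+N}.$$ Then there exists $\lambda_0>0$ such that for every $\lambda\in(0,\lambda_0)$, $N=1$ is the unique maximizer of $g_\lambda(N)$ over all positive integers $N$.
   Context: $g_\lambda(N)$ is (up to the constant factor $\lambda R$) the lower bound on the transmission capacity of an $N$-hop ad hoc network with equidistant hops of length $d/N$, ALOHA access probability $p=1$, active transmitter density $\lambda$, SIR threshold $\beta$, path-loss exponent $\alpha$, end-to-end retransmission budget $D$ split as $\lfloor D/N\rfloor$ per hop, and the end-to-end delay bounded by $D+N$; $q_\lambda(N)$ is the per-hop single-slot outage probability. *)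

From Stdlib Require Import Reals Lra Lia.
Open Scope R_scope.

Definition c1 (alpha : R) : R :=
  (2 * PI ^ 2 / alpha) * / sin (2 * PI / alpha).

Definition q_out (alpha beta d lambda : R) (N : nat) : R :=
  1 - exp (- (c1 alpha * lambda * (d / INR N) ^ 2 * Rpower beta (2 / alpha))).

Definition g_tc (alpha beta d lambda : R) (D N : nat) : R :=
  (1 - q_out alpha beta d lambda N ^ (Nat.div D N + 1)) ^ N / (INR D + INR N).

(* For small density every per-hop outage probability is small, so g(N) is
   close to its upper bound 1/(D+N).  Since q(1) <= lambda K with
   K = c1 d^2 beta^(2/alpha), once q(1) < 1/(D+2) the one-hop value
   g(1) = (1 - q(1)^(D+1))/(D+1) exceeds 1/(D+2) >= 1/(D+N) >= g(N) for N >= 2. *)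

From Stdlib Require Import Reals Lra Lia.
Open Scope R_scope.

Lemma c1_pos (alpha : R) : 2 < alpha -> 0 < c1 alpha.
Proof.
  intros Halpha. unfold c1.
  assert (HPI := PI_RGT_0).
  assert (Hsin : 0 < sin (2 * PI / alpha)).
  { apply sin_gt_0.
    - apply Rdiv_lt_0_compat; lra.
    - apply (Rmult_lt_reg_r alpha); [lra|].
      unfold Rdiv. rewrite Rmult_assoc, Rinv_l by lra. nra. }
  apply Rmult_lt_0_compat.
  - apply Rdiv_lt_0_compat; [apply Rmult_lt_0_compat, pow_lt|]; lra.
  - apply Rinv_0_lt_compat; lra.
Qed.

Lemma one_minus_exp_opp_le (x : R) : 1 - exp (- x) <= x.
Proof. pose proof (exp_ineq1_le (- x)). lra. Qed.

Lemma one_minus_exp_opp_unit (x : R) : 0 <= x -> 0 <= 1 - exp (- x) <= 1.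
Proof.
  intros Hx. pose proof (exp_pos (- x)).
  assert (exp (- x) <= exp 0).
  { destruct (Req_dec x 0) as [-> | Hx0]; [rewrite Ropp_0; lra|].
    left; apply exp_increasing; lra. }
  rewrite exp_0 in *. lra.
Qed.

Lemma pow_le1 (y : R) (k : nat) : 0 <= y <= 1 -> y ^ k <= 1.
Proof. intros. rewrite <- (pow1 k). apply pow_incr; lra. Qed.

Lemma q_out_unit (alpha beta d lambda : R) (N : nat) :
  2 < alpha -> 0 <= lambda -> 0 <= q_out alpha beta d lambda N <= 1.
Proof.
  intros Halpha Hlambda. unfold q_out.
  apply one_minus_exp_opp_unit.
  pose proof (c1_pos alpha Halpha).
  assert (0 < Rpower beta (2 / alpha)) by apply exp_pos.
  apply Rmult_le_pos; [apply Rmult_le_pos; [nra | apply pow2_ge_0] | lra].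
Qed.

Lemma q_out_1_le (alpha beta d lambda : R) :
  q_out alpha beta d lambda 1 <= lambda * (c1 alpha * d ^ 2 * Rpower beta (2 / alpha)).
Proof.
  unfold q_out. rewrite INR_1, Rdiv_1_r.
  replace (lambda * _) with (c1 alpha * lambda * d ^ 2 * Rpower beta (2 / alpha)) by ring.
  apply one_minus_exp_opp_le.
Qed.

Lemma g_tc_le_inv (alpha beta d lambda : R) (D N : nat) :
  2 < alpha -> 0 <= lambda -> (0 < N)%nat ->
  g_tc alpha beta d lambda D N <= / (INR D + INR N).
Proof.
  intros Halpha Hlambda HN. unfold g_tc, Rdiv.
  pose proof (q_out_unit alpha beta d lambda N Halpha Hlambda) as Hq.
  set (q := q_out alpha beta d lambda N) in *.
  assert (Hqk : 0 <= q ^ (Nat.div D N + 1) <= 1) by (split; [apply pow_le | apply pow_le1]; lra).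
  assert (Hpos : 0 < INR D + INR N) by (pose proof (pos_INR D); pose proof (lt_0_INR N HN); lra).
  rewrite <- (Rmult_1_l (/ (INR D + INR N))) at 2.
  apply Rmult_le_compat_r; [left; apply Rinv_0_lt_compat; lra|].
  apply pow_le1; lra.
Qed.

(* The bound q^(D+1) <= q is all that is needed: (1-q)(D+2) > D+1 when q(D+2) < 1. *)
Lemma inv_succ_lt_one_minus_pow_div (q : R) (D : nat) :
  0 <= q -> q * (INR D + 2) < 1 -> / (INR D + 2) < (1 - q ^ (D + 1)) / (INR D + 1).
Proof.
  intros Hq Hsmall.
  pose proof (pos_INR D).
  assert (Hq1 : q <= 1) by nra.
  assert (Hpow : q ^ (D + 1) <= q).
  { rewrite Nat.add_comm. simpl. pose proof (pow_le1 q D (conj Hq Hq1)).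
    pose proof (pow_le q D Hq). nra. }
  apply (Rmult_lt_reg_r ((INR D + 2) * (INR D + 1))); [nra|].
  replace (/ (INR D + 2) * ((INR D + 2) * (INR D + 1))) with (INR D + 1) by (field; lra).
  replace ((1 - q ^ (D + 1)) / (INR D + 1) * ((INR D + 2) * (INR D + 1)))
    with ((1 - q ^ (D + 1)) * (INR D + 2)) by (field; lra).
  nra.
Qed.

Lemma g_tc_1 (alpha beta d lambda : R) (D : nat) :
  g_tc alpha beta d lambda D 1 = (1 - q_out alpha beta d lambda 1 ^ (D + 1)) / (INR D + 1).
Proof. unfold g_tc. rewrite Nat.div_1_r, INR_1, pow_1. reflexivity. Qed.

Theorem proposition7 (alpha beta d : R) (D : nat) :
  2 < alpha -> 0 < beta -> 0 < d ->
  exists lambda0 : R, 0 < lambda0 /\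
    forall lambda : R, 0 < lambda < lambda0 ->
      forall N : nat, (1 < N)%nat ->
        g_tc alpha beta d lambda D N < g_tc alpha beta d lambda D 1.
Proof.
  intros Halpha _ Hd.
  set (K := c1 alpha * d ^ 2 * Rpower beta (2 / alpha)).
  assert (HK : 0 < K).
  { pose proof (c1_pos alpha Halpha).
    assert (0 < Rpower beta (2 / alpha)) by apply exp_pos.
    assert (0 < d ^ 2) by (apply pow_lt; lra).
    unfold K. apply Rmult_lt_0_compat; [apply Rmult_lt_0_compat|]; lra. }
  pose proof (pos_INR D).
  exists (/ ((INR D + 2) * K)). split; [apply Rinv_0_lt_compat; nra|].
  intros lambda [Hlambda Hlambda0] N HN.
  assert (Hsmall : lambda * K * (INR D + 2) < 1).
  { apply (Rmult_lt_compat_r ((INR D + 2) * K)) in Hlambda0; [|nra].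
    rewrite Rinv_l in Hlambda0 by nra. lra. }
  assert (HN2 : 2 <= INR N) by (replace 2 with (INR 2) by (simpl; lra); apply le_INR; lia).
  pose proof (g_tc_le_inv alpha beta d lambda D N Halpha ltac:(lra) ltac:(lia)) as HgN.
  assert (Hinv : / (INR D + INR N) <= / (INR D + 2)) by (apply Rinv_le_contravar; lra).
  pose proof (q_out_unit alpha beta d lambda 1 Halpha ltac:(lra)) as Hq.
  pose proof (q_out_1_le alpha beta d lambda) as Hq1. fold K in Hq1.
  pose proof (inv_succ_lt_one_minus_pow_div (q_out alpha beta d lambda 1) D
                ltac:(lra) ltac:(nra)) as Hg1.
  rewrite g_tc_1. lra.
Qed.
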